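(* With $i=\sqrt{-1}$, \begin{align*} \overline{S}(i,q)&=\sum_{n=1}^\infty q^{n^2}-\sum_{n=1}^\infty(-1)^nq^{2n^2},\\ \overline{S}_1(i,q)&=\sum_{n=1}^\infty q^{(2n-1)^2},\\ \overline{S}_2(i,q)&=\sum_{n=1}^\infty q^{(2n)^2}-\sum_{n=1}^\infty(-1)^nq^{2n^2}. \end{align*}
   Context: $(a;q)_\infty=\prod_{k\ge0}(1-aq^k)$. Define \begin{align*} \overline{S}(z,q)&=\sum_{n=1}^\infty\frac{q^n(-q^{n+1};q)_\infty(q^{n+1};q)_\infty}{(zq^n;q)_\infty(z^{-1}q^n;q)_\infty},\\ \overline{S}_1(z,q)&=\sum_{n=0}^\infty\frac{q^{2n+1}(-q^{2n+2};q)_\infty(q^{2n+2};q)_\infty}{(zq^{2n+1};q)_\infty(z^{-1}q^{2n+1};q)_\infty},\\ \overline{S}_2(z,q)&=\sum_{n=1}^\infty\frac{q^{2n}(-q^{2n+1};q)_\infty(q^{2n+1};q)_\infty}{(zq^{2n};q)_\infty(z^{-1}q^{2n};q)_\infty}. \end{align*} *)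

From Stdlib Require Import Reals.
From Coquelicot Require Import Coquelicot.
Open Scope C_scope.

(* Limit of a complex sequence, taken componentwise (total operator;
   meaningful when the sequence converges). *)
Definition CLim (u : nat -> C) : C :=
  (real (Lim_seq (fun n => fst (u n))), real (Lim_seq (fun n => snd (u n)))).

Fixpoint Cpsum (a : nat -> C) (N : nat) : C :=
  match N with O => 0 | S N' => Cpsum a N' + a N' end.

Definition CSeries (a : nat -> C) : C := CLim (Cpsum a).

Fixpoint qpoch_part (a q : C) (N : nat) : C :=
  match N with O => 1 | S N' => qpoch_part a q N' * (1 - a * pow_n q N') end.

Definition qpoch_inf (a q : C) : C := CLim (qpoch_part a q).

Definition Sbar (z q : C) : C :=
  CSeries (fun m => let n := S m in
    pow_n q n * qpoch_inf (- pow_n q (n+1)) q * qpoch_inf (pow_n q (n+1)) q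
    / (qpoch_inf (z * pow_n q n) q * qpoch_inf (/ z * pow_n q n) q)).

Definition Sbar1 (z q : C) : C :=
  CSeries (fun n =>
    pow_n q (2*n+1) * qpoch_inf (- pow_n q (2*n+2)) q * qpoch_inf (pow_n q (2*n+2)) q
    / (qpoch_inf (z * pow_n q (2*n+1)) q * qpoch_inf (/ z * pow_n q (2*n+1)) q)).

Definition Sbar2 (z q : C) : C :=
  CSeries (fun m => let n := S m in
    pow_n q (2*n) * qpoch_inf (- pow_n q (2*n+1)) q * qpoch_inf (pow_n q (2*n+1)) q
    / (qpoch_inf (z * pow_n q (2*n)) q * qpoch_inf (/ z * pow_n q (2*n)) q)).

From Stdlib Require Import Reals Lra Lia ZArith.
From Coquelicot Require Import Coquelicot.
Open Scope C_scope.

(* Put Q = q^2 and theta(q) = sum_{n>=1} q^(n^2).  At z = i the n-th summand of Sbar collapses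
   to q^n (Q^(n+1);Q) / (-Q^n;Q), and Euler's identity (-Q;Q) (Q;Q^2) = 1 rewrites it as
   (R/2) c_n q^n, where R = (Q;Q) (Q;Q^2) and c_n = (-1;Q)_n / (Q;Q)_n.  By the q-binomial theorem
   F(z) = sum c_n z^n equals (-z;Q) / (z;Q), so R F(q) = (Q;Q) (-q;Q)^2, which the Jacobi triple
   product (proved from Rothe's finite identity and Tannery's theorem) evaluates to
   1 + 2 theta(q); likewise R = 1 + 2 theta(-Q).  Hence Sbar = (R F(q) - R) / 2, and Sbar_1,
   Sbar_2 are R/2 times the odd and even parts of F(q), which are separated by comparing F(q)
   with F(-q) and theta(q) with theta(-q). *)

Definition is_Clim_seq (u : nat -> C) (l : C) : Prop :=
  forall eps : R, (0 < eps)%R ->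
    exists N, forall n, (N <= n)%nat -> (Cmod (u n - l) < eps)%R.

Lemma Cminus_0_r z : z - 0 = z.
Proof. ring. Qed.

Lemma Cminus_diag z : z - z = 0.
Proof. ring. Qed.

Lemma Cmult_cancel_l (c a b : C) : c <> 0 -> c * a = c * b -> a = b.
Proof. intros Hc H. rewrite <- (Cmult_1_l a), <- (Cinv_l c Hc), <- Cmult_assoc, H. field. auto. Qed.

Lemma Cmod_minus_sym a b : Cmod (a - b) = Cmod (b - a).
Proof. replace (a - b) with (- (b - a)) by ring. apply Cmod_opp. Qed.

Lemma Cmod_triangle_minus a b c : (Cmod (a - c) <= Cmod (a - b) + Cmod (b - c))%R.
Proof. replace (a - c) with ((a - b) + (b - c)) by ring. apply Cmod_triangle. Qed.

Lemma Rabs_fst_le_Cmod z : (Rabs (fst z) <= Cmod z)%R.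
Proof. pose proof (Rmax_Cmod z); pose proof (Rmax_l (Rabs (fst z)) (Rabs (snd z))); lra. Qed.

Lemma Rabs_snd_le_Cmod z : (Rabs (snd z) <= Cmod z)%R.
Proof. pose proof (Rmax_Cmod z); pose proof (Rmax_r (Rabs (fst z)) (Rabs (snd z))); lra. Qed.

Lemma Cmod_le_Rabs_fst_snd z : (Cmod z <= Rabs (fst z) + Rabs (snd z))%R.
Proof.
  destruct z as [x y]. unfold Cmod; simpl.
  pose proof (Rabs_pos x). pose proof (Rabs_pos y).
  rewrite <- (sqrt_pow2 (Rabs x + Rabs y)) by lra. apply sqrt_le_1_alt.
  pose proof (pow2_abs x). pose proof (pow2_abs y). simpl in *. nra.
Qed.

Lemma is_Clim_seq_CLim u l : is_Clim_seq u l -> CLim u = l.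
Proof.
  intros H. unfold CLim.
  assert (Hfst : is_lim_seq (fun n => fst (u n)) (fst l)).
  { apply is_lim_seq_spec. intros eps. destruct (H eps (cond_pos eps)) as [N HN].
    exists N. intros n Hn. eapply Rle_lt_trans; [|apply (HN n Hn)]. exact (Rabs_fst_le_Cmod (u n - l)). }
  assert (Hsnd : is_lim_seq (fun n => snd (u n)) (snd l)).
  { apply is_lim_seq_spec. intros eps. destruct (H eps (cond_pos eps)) as [N HN].
    exists N. intros n Hn. eapply Rle_lt_trans; [|apply (HN n Hn)]. exact (Rabs_snd_le_Cmod (u n - l)). }
  rewrite (is_lim_seq_unique _ _ Hfst), (is_lim_seq_unique _ _ Hsnd). now destruct l.
Qed.

Lemma is_Clim_seq_unique u a b : is_Clim_seq u a -> is_Clim_seq u b -> a = b.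
Proof. intros Ha Hb. now rewrite <- (is_Clim_seq_CLim _ _ Ha), (is_Clim_seq_CLim _ _ Hb). Qed.

Lemma is_Clim_seq_const c : is_Clim_seq (fun _ => c) c.
Proof.
  intros eps He. exists 0%nat. intros. now rewrite Cminus_diag, Cmod_0.
Qed.

Lemma is_Clim_seq_ext_loc u v l :
  (exists N, forall n, (N <= n)%nat -> u n = v n) -> is_Clim_seq u l -> is_Clim_seq v l.
Proof.
  intros [N0 HN0] H eps He. destruct (H eps He) as [N HN]. exists (max N N0).
  intros n Hn. rewrite <- HN0 by lia. apply HN; lia.
Qed.

Lemma is_Clim_seq_ext u v l : (forall n, u n = v n) -> is_Clim_seq u l -> is_Clim_seq v l.
Proof. intros H. apply is_Clim_seq_ext_loc. now exists 0%nat. Qed.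

Lemma is_Clim_seq_plus u v a b :
  is_Clim_seq u a -> is_Clim_seq v b -> is_Clim_seq (fun n => u n + v n) (a + b).
Proof.
  intros Hu Hv eps He. destruct (Hu (eps/2)%R ltac:(lra)) as [N1 H1].
  destruct (Hv (eps/2)%R ltac:(lra)) as [N2 H2]. exists (max N1 N2). intros n Hn.
  replace (u n + v n - (a + b)) with ((u n - a) + (v n - b)) by ring.
  eapply Rle_lt_trans; [apply Cmod_triangle|].
  specialize (H1 n ltac:(lia)). specialize (H2 n ltac:(lia)). lra.
Qed.

Lemma is_Clim_seq_opp u a : is_Clim_seq u a -> is_Clim_seq (fun n => - u n) (- a).
Proof.
  intros Hu eps He. destruct (Hu eps He) as [N H]. exists N. intros n Hn.
  replace (- u n - - a) with (- (u n - a)) by ring. rewrite Cmod_opp. auto.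
Qed.

Lemma is_Clim_seq_minus u v a b :
  is_Clim_seq u a -> is_Clim_seq v b -> is_Clim_seq (fun n => u n - v n) (a - b).
Proof. intros. apply is_Clim_seq_plus, is_Clim_seq_opp; auto. Qed.

Lemma Cmod_bounded_init (u : nat -> C) N :
  exists M, (0 <= M)%R /\ forall n, (n < N)%nat -> (Cmod (u n) <= M)%R.
Proof.
  induction N as [|N [M [HM0 HM]]].
  - exists 0%R. split; [lra | intros; lia].
  - exists (Rmax M (Cmod (u N))). split; [apply Rle_trans with M; [auto | apply Rmax_l]|].
    intros n Hn. destruct (Nat.eq_dec n N) as [->|]; [apply Rmax_r|].
    apply Rle_trans with M; [apply HM; lia | apply Rmax_l].
Qed.

Lemma is_Clim_seq_bounded u l :
  is_Clim_seq u l -> exists M, (0 <= M)%R /\ forall n, (Cmod (u n) <= M)%R.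
Proof.
  intros H. destruct (H 1%R ltac:(lra)) as [N HN].
  destruct (Cmod_bounded_init u N) as [M [HM0 HM]].
  exists (Rmax M (Cmod l + 1)). split; [apply Rle_trans with M; [auto | apply Rmax_l]|].
  intros n. destruct (Nat.lt_ge_cases n N) as [Hn|Hn].
  - apply Rle_trans with M; [apply HM; auto | apply Rmax_l].
  - apply Rle_trans with (Cmod l + 1)%R; [|apply Rmax_r].
    specialize (HN n Hn). replace (u n) with ((u n - l) + l) by ring.
    eapply Rle_trans; [apply Cmod_triangle|]. lra.
Qed.

Lemma is_Clim_seq_mult u v a b :
  is_Clim_seq u a -> is_Clim_seq v b -> is_Clim_seq (fun n => u n * v n) (a * b).
Proof.
  intros Hu Hv. destruct (is_Clim_seq_bounded _ _ Hu) as [M [HM0 HM]].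
  intros eps He. pose proof (Cmod_ge_0 b) as Hb.
  set (e1 := (eps / (2 * (Cmod b + 1)))%R). set (e2 := (eps / (2 * (M + 1)))%R).
  assert (He1 : (0 < e1)%R) by (apply Rdiv_lt_0_compat; lra).
  assert (He2 : (0 < e2)%R) by (apply Rdiv_lt_0_compat; lra).
  destruct (Hu e1 He1) as [N1 H1]. destruct (Hv e2 He2) as [N2 H2].
  exists (max N1 N2). intros n Hn.
  replace (u n * v n - a * b) with (u n * (v n - b) + (u n - a) * b) by ring.
  eapply Rle_lt_trans; [apply Cmod_triangle|]. rewrite !Cmod_mult.
  specialize (H1 n ltac:(lia)). specialize (H2 n ltac:(lia)). specialize (HM n).
  pose proof (Cmod_ge_0 (v n - b)). pose proof (Cmod_ge_0 (u n - a)). pose proof (Cmod_ge_0 (u n)).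
  assert (E1 : (e1 * (Cmod b + 1) = eps / 2)%R) by (unfold e1; field; lra).
  assert (E2 : (e2 * (M + 1) = eps / 2)%R) by (unfold e2; field; lra).
  nra.
Qed.

Lemma is_Clim_seq_scal c u a : is_Clim_seq u a -> is_Clim_seq (fun n => c * u n) (c * a).
Proof. intros. apply is_Clim_seq_mult; auto using is_Clim_seq_const. Qed.

Lemma is_Clim_seq_Cmod_lb u l : is_Clim_seq u l -> l <> 0 -> (forall n, u n <> 0) ->
  exists d, (0 < d)%R /\ forall n, (d <= Cmod (u n))%R.
Proof.
  intros H Hl Hu. pose proof (proj1 (Cmod_gt_0 l) Hl) as Hl'.
  destruct (H (Cmod l / 2)%R ltac:(lra)) as [N HN].
  assert (Hinit : exists d, (0 < d)%R /\ forall n, (n < N)%nat -> (d <= Cmod (u n))%R).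
  { clear HN. induction N as [|N [d [Hd0 Hd]]].
    - exists 1%R. split; [lra | intros; lia].
    - exists (Rmin d (Cmod (u N))). split; [apply Rmin_glb_lt; auto; now apply Cmod_gt_0|].
      intros n Hn. destruct (Nat.eq_dec n N) as [->|]; [apply Rmin_r|].
      apply Rle_trans with d; [apply Rmin_l | apply Hd; lia]. }
  destruct Hinit as [d [Hd HdN]].
  exists (Rmin d (Cmod l / 2)). split; [apply Rmin_glb_lt; lra|].
  intros n. destruct (Nat.lt_ge_cases n N) as [Hn|Hn].
  - apply Rle_trans with d; [apply Rmin_l | auto].
  - apply Rle_trans with (Cmod l / 2)%R; [apply Rmin_r|].
    specialize (HN n Hn). pose proof (Cmod_triangle_minus l (u n) 0) as Ht.
    rewrite !Cminus_0_r, Cmod_minus_sym in Ht. lra.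
Qed.

Lemma is_Clim_seq_inv u l : is_Clim_seq u l -> l <> 0 -> (forall n, u n <> 0) ->
  is_Clim_seq (fun n => / u n) (/ l).
Proof.
  intros H Hl Hu. destruct (is_Clim_seq_Cmod_lb _ _ H Hl Hu) as [d [Hd Hdn]].
  pose proof (proj1 (Cmod_gt_0 l) Hl) as Hl'.
  intros eps He. destruct (H (eps * d * Cmod l)%R ltac:(apply Rmult_lt_0_compat; [apply Rmult_lt_0_compat|]; lra)) as [N HN].
  exists N. intros n Hn.
  replace (/ u n - / l) with ((l - u n) * (/ u n * / l)) by (field; auto).
  rewrite !Cmod_mult, !Cmod_inv, Cmod_minus_sym by auto.
  specialize (HN n Hn). specialize (Hdn n).
  apply Rle_lt_trans with (Cmod (u n - l) * (/ d * / Cmod l))%R.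
  - apply Rmult_le_compat_l; [apply Cmod_ge_0|]. apply Rmult_le_compat_r.
    + left; apply Rinv_0_lt_compat; auto.
    + apply Rinv_le_contravar; auto.
  - apply Rlt_le_trans with ((eps * d * Cmod l) * (/ d * / Cmod l))%R.
    + apply Rmult_lt_compat_r; auto. apply Rmult_lt_0_compat; apply Rinv_0_lt_compat; auto.
    + right. field. split; lra.
Qed.

Lemma is_Clim_seq_subseq u l (phi : nat -> nat) :
  (forall n, (n <= phi n)%nat) -> is_Clim_seq u l -> is_Clim_seq (fun n => u (phi n)) l.
Proof.
  intros Hp H eps He. destruct (H eps He) as [N HN]. exists N. intros n Hn.
  apply HN. specialize (Hp n). lia.
Qed.

Lemma is_Clim_seq_incr u l k : is_Clim_seq u l -> is_Clim_seq (fun n => u (n + k)%nat) l.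
Proof. apply is_Clim_seq_subseq. intros; lia. Qed.

Lemma is_Clim_seq_decr u l k : is_Clim_seq u l -> is_Clim_seq (fun n => u (n - k)%nat) l.
Proof. intros H eps He. destruct (H eps He) as [N HN]. exists (N + k)%nat. intros. apply HN. lia. Qed.

Lemma is_Clim_seq_Cmod_le u l B N0 :
  is_Clim_seq u l -> (forall n, (N0 <= n)%nat -> (Cmod (u n) <= B)%R) -> (Cmod l <= B)%R.
Proof.
  intros H HB. apply Rle_plus_epsilon. intros eps He. destruct (H eps He) as [N HN].
  specialize (HN (max N N0) ltac:(lia)). specialize (HB (max N N0) ltac:(lia)).
  pose proof (Cmod_triangle_minus l (u (max N N0)) 0) as Ht.
  rewrite !Cminus_0_r, Cmod_minus_sym in Ht. lra.
Qed.

Lemma is_Clim_seq_Cauchy u :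
  (forall eps, (0 < eps)%R -> exists N, forall n m, (N <= n)%nat -> (N <= m)%nat ->
     (Cmod (u n - u m) < eps)%R) ->
  exists l, is_Clim_seq u l.
Proof.
  intros H.
  assert (H1 : Cauchy_crit (fun n => fst (u n))).
  { intros eps He. destruct (H eps He) as [N HN]. exists N. intros n m Hn Hm.
    eapply Rle_lt_trans; [|apply (HN n m Hn Hm)]. exact (Rabs_fst_le_Cmod (u n - u m)). }
  assert (H2 : Cauchy_crit (fun n => snd (u n))).
  { intros eps He. destruct (H eps He) as [N HN]. exists N. intros n m Hn Hm.
    eapply Rle_lt_trans; [|apply (HN n m Hn Hm)]. exact (Rabs_snd_le_Cmod (u n - u m)). }
  destruct (Rcomplete.R_complete _ H1) as [l1 Hl1].
  destruct (Rcomplete.R_complete _ H2) as [l2 Hl2].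
  exists (l1, l2). intros eps He.
  destruct (Hl1 (eps/2)%R ltac:(lra)) as [N1 HN1]. destruct (Hl2 (eps/2)%R ltac:(lra)) as [N2 HN2].
  exists (max N1 N2). intros n Hn. eapply Rle_lt_trans; [apply Cmod_le_Rabs_fst_snd|].
  specialize (HN1 n ltac:(lia)). specialize (HN2 n ltac:(lia)). unfold R_dist, Rminus in *. simpl. lra.
Qed.

Lemma pow_n_Cpow (q : C) n : @eq C (pow_n q n) (q ^ n).
Proof. induction n as [|n IH]; simpl; [reflexivity | now rewrite IH]. Qed.

Lemma Cpsum_ext a b n : (forall k, (k < n)%nat -> a k = b k) -> Cpsum a n = Cpsum b n.
Proof.
  induction n as [|n IH]; intros H; simpl; auto.
  rewrite IH by (intros; apply H; lia). now rewrite H by lia.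
Qed.

Lemma Cpsum_plus a b n : Cpsum (fun k => a k + b k) n = Cpsum a n + Cpsum b n.
Proof. induction n as [|n IH]; simpl; [ring | rewrite IH; ring]. Qed.

Lemma Cpsum_minus a b n : Cpsum (fun k => a k - b k) n = Cpsum a n - Cpsum b n.
Proof. induction n as [|n IH]; simpl; [ring | rewrite IH; ring]. Qed.

Lemma Cpsum_scal c a n : Cpsum (fun k => c * a k) n = c * Cpsum a n.
Proof. induction n as [|n IH]; simpl; [ring | rewrite IH; ring]. Qed.

Lemma Cpsum_S_l a n : Cpsum a (S n) = a 0%nat + Cpsum (fun k => a (S k)) n.
Proof.
  induction n as [|n IH]; [simpl; ring|].
  change (Cpsum a (S (S n)) = a 0%nat + (Cpsum (fun k => a (S k)) n + a (S n))).
  change (Cpsum a (S n) + a (S n) = a 0%nat + (Cpsum (fun k => a (S k)) n + a (S n))).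
  rewrite IH. ring.
Qed.

Lemma Cpsum_telescope p n : Cpsum (fun k => p (S k) - p k) n = p n - p 0%nat.
Proof. induction n as [|n IH]; simpl; [ring | rewrite IH; ring]. Qed.

Lemma Cpsum_split a n m : Cpsum a (n + m) = Cpsum a n + Cpsum (fun k => a (n + k)%nat) m.
Proof.
  induction m as [|m IH]; [rewrite Nat.add_0_r; simpl; ring|].
  rewrite Nat.add_succ_r. simpl. rewrite IH. ring.
Qed.

Lemma Cpsum_rev a n : Cpsum (fun j => a (n - 1 - j)%nat) n = Cpsum a n.
Proof.
  induction n as [|n IH]; auto. rewrite Cpsum_S_l. simpl Cpsum at 2. rewrite <- IH.
  replace (S n - 1 - 0)%nat with n by lia. rewrite Cplus_comm. f_equal.
  apply Cpsum_ext. intros. f_equal. lia.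
Qed.

Lemma Cpsum_even_odd a n :
  Cpsum a (2 * n) = Cpsum (fun k => a (2 * k)%nat) n + Cpsum (fun k => a (2 * k + 1)%nat) n.
Proof.
  induction n as [|n IH]; [simpl; ring|]. replace (2 * S n)%nat with (S (S (2 * n))) by lia.
  cbn [Cpsum]. rewrite IH. replace (S (2 * n)) with (2 * n + 1)%nat by lia. ring.
Qed.

Fixpoint Cprod (f : nat -> C) (n : nat) : C :=
  match n with O => 1 | S n' => Cprod f n' * f n' end.

Lemma Cprod_ext f g n : (forall k, (k < n)%nat -> f k = g k) -> Cprod f n = Cprod g n.
Proof.
  induction n as [|n IH]; intros H; simpl; auto.
  rewrite IH by (intros; apply H; lia). now rewrite H by lia.
Qed.

Lemma Cprod_mult f g n : Cprod (fun k => f k * g k) n = Cprod f n * Cprod g n.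
Proof. induction n as [|n IH]; simpl; [ring | rewrite IH; ring]. Qed.

Lemma Cprod_const c n : Cprod (fun _ => c) n = c ^ n.
Proof. induction n as [|n IH]; simpl; auto. rewrite IH. ring. Qed.

Lemma Cprod_split f n m : Cprod f (n + m) = Cprod f n * Cprod (fun k => f (n + k)%nat) m.
Proof.
  induction m as [|m IH]; [rewrite Nat.add_0_r; simpl; ring|].
  rewrite Nat.add_succ_r. simpl. rewrite IH. ring.
Qed.

Lemma Cprod_S_l f n : Cprod f (S n) = f 0%nat * Cprod (fun k => f (S k)) n.
Proof. rewrite <- Nat.add_1_l, Cprod_split. simpl. ring. Qed.

Lemma Cprod_rev f n : Cprod (fun j => f (n - 1 - j)%nat) n = Cprod f n.
Proof.
  induction n as [|n IH]; auto. rewrite Cprod_S_l. simpl Cprod at 2. rewrite <- IH.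
  replace (S n - 1 - 0)%nat with n by lia. rewrite Cmult_comm. f_equal.
  apply Cprod_ext. intros. f_equal. lia.
Qed.

Lemma Cprod_even_odd f n :
  Cprod f (2 * n) = Cprod (fun k => f (2 * k)%nat) n * Cprod (fun k => f (2 * k + 1)%nat) n.
Proof.
  induction n as [|n IH]; [simpl; ring|]. replace (2 * S n)%nat with (S (S (2 * n))) by lia.
  cbn [Cprod]. rewrite IH. replace (S (2 * n)) with (2 * n + 1)%nat by lia. ring.
Qed.

Lemma Cprod_neq_0 (f : nat -> C) n : (forall k, (k < n)%nat -> f k <> 0) -> Cprod f n <> 0.
Proof.
  induction n as [|n IH]; intros H; simpl.
  - intro E. injection E. lra.
  - apply Cmult_neq_0; [apply IH; intros; apply H|apply H]; lia.
Qed.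

Lemma qpoch_part_Cprod a q n : qpoch_part a q n = Cprod (fun k => 1 - a * q ^ k) n.
Proof. induction n as [|n IH]; simpl; auto. now rewrite IH, pow_n_Cpow. Qed.

Lemma pow_eventually_lt r : (0 <= r < 1)%R -> forall y, (0 < y)%R ->
  exists N, forall n, (N <= n)%nat -> (r ^ n < y)%R.
Proof.
  intros Hr y Hy. destruct (pow_lt_1_zero r ltac:(rewrite Rabs_pos_eq; lra) y Hy) as [N HN].
  exists N. intros n Hn. specialize (HN n Hn). now rewrite Rabs_pos_eq in HN by (apply pow_le; lra).
Qed.

Lemma pow_le_1 (r : R) k : (0 <= r <= 1)%R -> (0 <= r ^ k <= 1)%R.
Proof. intros Hr. induction k; simpl; nra. Qed.

Lemma pow_decr (r : R) m n : (0 <= r <= 1)%R -> (m <= n)%nat -> (r ^ n <= r ^ m)%R.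
Proof.
  intros Hr Hmn. replace n with (m + (n - m))%nat by lia. rewrite pow_add.
  pose proof (pow_le r m ltac:(lra)). pose proof (pow_le_1 r (n - m) Hr). nra.
Qed.

Lemma is_Clim_seq_pow q : (Cmod q < 1)%R -> is_Clim_seq (fun n => q ^ n) 0.
Proof.
  intros Hq eps He.
  destruct (pow_eventually_lt (Cmod q) ltac:(split; [apply Cmod_ge_0|auto]) eps He) as [N HN].
  exists N. intros n Hn. rewrite Cminus_0_r, Cmod_pow. auto.
Qed.

Lemma Cpsum_block_geom_bound a (K r : R) M n : (0 <= r < 1)%R -> (0 <= K)%R ->
  (forall k, (k < n)%nat -> (Cmod (a (M + k)%nat) <= K * r ^ (M + k))%R) ->
  (Cmod (Cpsum a (M + n) - Cpsum a M) <= K * r ^ M / (1 - r))%R.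
Proof.
  intros Hr HK Ha.
  assert (Hk : forall k, (k <= n)%nat ->
     (Cmod (Cpsum a (M + k) - Cpsum a M) <= K * r ^ M * (1 - r ^ k) / (1 - r))%R).
  { induction k as [|k IH]; intros Hk.
    - rewrite Nat.add_0_r, Cminus_diag, Cmod_0. right. simpl. field. lra.
    - rewrite Nat.add_succ_r. simpl Cpsum.
      replace (Cpsum a (M + k) + a (M + k)%nat - Cpsum a M)
        with ((Cpsum a (M + k) - Cpsum a M) + a (M + k)%nat) by ring.
      eapply Rle_trans; [apply Cmod_triangle|].
      specialize (Ha k ltac:(lia)). rewrite pow_add in Ha. specialize (IH ltac:(lia)).
      apply Rle_trans with (K * r ^ M * (1 - r ^ k) / (1 - r) + K * (r ^ M * r ^ k))%R; [lra|].
      right. simpl. field. lra. }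
  eapply Rle_trans; [apply Hk; lia|]. unfold Rdiv. apply Rmult_le_compat_r.
  - left; apply Rinv_0_lt_compat; lra.
  - pose proof (pow_le r n ltac:(lra)). pose proof (pow_le r M ltac:(lra)).
    assert (0 <= K * r ^ M)%R by (apply Rmult_le_pos; auto). nra.
Qed.

Lemma geom_tail_small (K r : R) : (0 <= r < 1)%R -> (0 <= K)%R -> forall eps, (0 < eps)%R ->
  exists N, (K * r ^ N / (1 - r) < eps)%R.
Proof.
  intros Hr HK eps He.
  destruct (pow_eventually_lt r Hr (eps * (1 - r) / (K + 1))%R) as [N HN].
  { apply Rdiv_lt_0_compat; [apply Rmult_lt_0_compat|]; lra. }
  exists N. specialize (HN N (le_n N)). pose proof (pow_le r N ltac:(lra)).
  apply Rle_lt_trans with ((K + 1) * r ^ N / (1 - r))%R.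
  - unfold Rdiv. apply Rmult_le_compat_r; [left; apply Rinv_0_lt_compat; lra | nra].
  - apply Rlt_le_trans with ((K + 1) * (eps * (1 - r) / (K + 1)) / (1 - r))%R.
    + unfold Rdiv. apply Rmult_lt_compat_r; [apply Rinv_0_lt_compat; lra|].
      apply Rmult_lt_compat_l; lra.
    + right. field. lra.
Qed.

Definition is_Cseries (a : nat -> C) (A : C) : Prop := is_Clim_seq (Cpsum a) A.

Lemma is_Cseries_CSeries a A : is_Cseries a A -> CSeries a = A.
Proof. apply is_Clim_seq_CLim. Qed.

Lemma is_Cseries_geom_dominated a (K r : R) : (0 <= r < 1)%R ->
  (forall n, (Cmod (a n) <= K * r ^ n)%R) ->
  exists S, is_Cseries a S /\ forall M, (Cmod (S - Cpsum a M) <= K * r ^ M / (1 - r))%R.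
Proof.
  intros Hr Ha.
  assert (HK : (0 <= K)%R) by (pose proof (Ha 0%nat); pose proof (Cmod_ge_0 (a 0%nat)); simpl in *; lra).
  assert (Hblock : forall M k, (Cmod (Cpsum a (M + k) - Cpsum a M) <= K * r ^ M / (1 - r))%R)
    by (intros; apply Cpsum_block_geom_bound; auto).
  destruct (is_Clim_seq_Cauchy (Cpsum a)) as [S HS].
  { intros eps He. destruct (geom_tail_small K r Hr HK (eps / 2) ltac:(lra)) as [N HN].
    exists N. intros n m Hn Hm.
    eapply Rle_lt_trans; [apply (Cmod_triangle_minus _ (Cpsum a N))|].
    replace n with (N + (n - N))%nat by lia. replace m with (N + (m - N))%nat by lia.
    rewrite (Cmod_minus_sym (Cpsum a N)).
    pose proof (Hblock N (n - N)%nat). pose proof (Hblock N (m - N)%nat). lra. }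
  exists S. split; auto. intros M. apply Rle_plus_epsilon. intros eps He.
  destruct (HS eps He) as [N HN].
  eapply Rle_trans; [apply (Cmod_triangle_minus _ (Cpsum a (M + N)))|].
  specialize (HN (M + N)%nat ltac:(lia)). rewrite Cmod_minus_sym in HN.
  specialize (Hblock M N). lra.
Qed.

Lemma is_Cseries_unique a A B : is_Cseries a A -> is_Cseries a B -> A = B.
Proof. apply is_Clim_seq_unique. Qed.

Lemma CSeries_ext a b : (forall k, a k = b k) -> CSeries a = CSeries b.
Proof.
  intros H. unfold CSeries, CLim.
  rewrite !(Lim_seq_ext (fun n => fst (Cpsum a n)) (fun n => fst (Cpsum b n))),
    !(Lim_seq_ext (fun n => snd (Cpsum a n)) (fun n => snd (Cpsum b n)));
    auto; intros n; now rewrite (Cpsum_ext a b n) by auto.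
Qed.

Lemma is_Cseries_geom_dominated_subseq a (K r : R) (phi : nat -> nat) : (0 <= r < 1)%R ->
  (forall n, (Cmod (a n) <= K * r ^ n)%R) -> (forall k, (k <= phi k)%nat) ->
  exists A, is_Cseries (fun k => a (phi k)) A.
Proof.
  intros Hr Ha Hp.
  assert (HK : (0 <= K)%R) by (pose proof (Ha 0%nat); pose proof (Cmod_ge_0 (a 0%nat)); simpl in *; lra).
  destruct (is_Cseries_geom_dominated (fun k => a (phi k)) K r Hr) as [A [HA _]]; [|now exists A].
  intros n. eapply Rle_trans; [apply Ha|].
  apply Rmult_le_compat_l; auto. apply pow_decr; auto. lra.
Qed.

Lemma is_Cseries_ext a b A : (forall k, a k = b k) -> is_Cseries a A -> is_Cseries b A.
Proof. intros H. apply is_Clim_seq_ext. intros. apply Cpsum_ext. auto. Qed.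

Lemma is_Cseries_S a A : is_Cseries a A -> is_Cseries (fun k => a (S k)) (A - a 0%nat).
Proof.
  intros H. apply is_Clim_seq_ext with (fun n => Cpsum a (S n) - a 0%nat).
  - intros. rewrite Cpsum_S_l. ring.
  - apply is_Clim_seq_minus; [|apply is_Clim_seq_const]. apply (is_Clim_seq_subseq _ _ S); auto.
Qed.

Lemma is_Cseries_cons a A : is_Cseries (fun k => a (S k)) A -> is_Cseries a (a 0%nat + A).
Proof.
  intros H. apply is_Clim_seq_ext_loc with (fun n => a 0%nat + Cpsum (fun k => a (S k)) (n - 1)).
  - exists 1%nat. intros n Hn. replace n with (S (n - 1)) at 2 by lia. now rewrite Cpsum_S_l.
  - apply is_Clim_seq_plus; [apply is_Clim_seq_const | now apply is_Clim_seq_decr].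
Qed.

Lemma is_Cseries_plus a b A B :
  is_Cseries a A -> is_Cseries b B -> is_Cseries (fun k => a k + b k) (A + B).
Proof.
  intros. eapply is_Clim_seq_ext; [intros; symmetry; apply Cpsum_plus|]. now apply is_Clim_seq_plus.
Qed.

Lemma is_Cseries_minus a b A B :
  is_Cseries a A -> is_Cseries b B -> is_Cseries (fun k => a k - b k) (A - B).
Proof.
  intros. eapply is_Clim_seq_ext; [intros; symmetry; apply Cpsum_minus|]. now apply is_Clim_seq_minus.
Qed.

Lemma is_Cseries_scal c a A : is_Cseries a A -> is_Cseries (fun k => c * a k) (c * A).
Proof.
  intros. eapply is_Clim_seq_ext; [intros; symmetry; apply Cpsum_scal|]. now apply is_Clim_seq_scal.
Qed.

Lemma is_Cseries_even_odd a A E O : is_Cseries a A ->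
  is_Cseries (fun k => a (2 * k)%nat) E -> is_Cseries (fun k => a (2 * k + 1)%nat) O -> A = E + O.
Proof.
  intros HA HE HO. apply (is_Clim_seq_unique (fun n => Cpsum a (2 * n))).
  - apply is_Clim_seq_subseq; auto. intros; lia.
  - eapply is_Clim_seq_ext; [intros; symmetry; apply Cpsum_even_odd|]. now apply is_Clim_seq_plus.
Qed.

(* The partial products are bounded by [exp (K / (1 - r))], so their increments [P_n e_n] form
   a dominated series. *)
Lemma Cprod_one_plus_cv (e : nat -> C) (K r : R) : (0 <= r < 1)%R ->
  (forall n, Cmod (e n) <= K * r ^ n)%R -> exists L, is_Clim_seq (Cprod (fun k => 1 + e k)) L.
Proof.
  intros Hr He.
  assert (HK : (0 <= K)%R) by (pose proof (He 0%nat); pose proof (Cmod_ge_0 (e 0%nat)); simpl in *; lra).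
  set (P := Cprod (fun k => 1 + e k)).
  assert (HP : forall n, (Cmod (P n) <= exp (K * (1 - r ^ n) / (1 - r)))%R).
  { induction n as [|n IH].
    - unfold P; simpl. rewrite Cmod_1. replace (K * (1 - 1) / (1 - r))%R with 0%R by (field; lra).
      rewrite exp_0. lra.
    - unfold P; simpl. fold P. rewrite Cmod_mult.
      apply Rle_trans with (exp (K * (1 - r ^ n) / (1 - r)) * exp (K * r ^ n))%R.
      + apply Rmult_le_compat; auto; try apply Cmod_ge_0.
        eapply Rle_trans; [apply Cmod_triangle|]. rewrite Cmod_1. specialize (He n).
        pose proof (exp_ineq1_le (K * r ^ n)). lra.
      + rewrite <- exp_plus. right. f_equal. field. lra. }
  assert (HPb : forall n, (Cmod (P n) <= exp (K / (1 - r)))%R).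
  { intros n. eapply Rle_trans; [apply HP|].
    assert (K * (1 - r ^ n) / (1 - r) <= K / (1 - r))%R.
    { unfold Rdiv. apply Rmult_le_compat_r; [left; apply Rinv_0_lt_compat; lra|].
      pose proof (pow_le r n ltac:(lra)). nra. }
    destruct (Rle_lt_or_eq_dec _ _ H) as [Hlt|Heq]; [left; now apply exp_increasing | rewrite Heq; lra]. }
  destruct (is_Cseries_geom_dominated (fun k => P (S k) - P k) (exp (K / (1 - r)) * K) r Hr)
    as [Sm [HS _]].
  { intros n. unfold P; simpl. fold P. replace (P n * (1 + e n) - P n) with (P n * e n) by ring.
    rewrite Cmod_mult, Rmult_assoc. apply Rmult_le_compat; auto; apply Cmod_ge_0. }
  exists (1 + Sm). apply is_Clim_seq_ext with (fun n => 1 + Cpsum (fun k => P (S k) - P k) n).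
  - intros n. rewrite Cpsum_telescope. change (P 0%nat) with (RtoC 1). ring.
  - apply is_Clim_seq_plus; [apply is_Clim_seq_const | auto].
Qed.

Lemma is_Clim_seq_Cpsum (g : nat -> nat -> C) h M : (forall m, is_Clim_seq (fun N => g N m) (h m)) ->
  is_Clim_seq (fun N => Cpsum (g N) M) (Cpsum h M).
Proof.
  intros H. induction M as [|M IH]; simpl; [apply is_Clim_seq_const | now apply is_Clim_seq_plus].
Qed.

Lemma tannery (g : nat -> nat -> C) (h : nat -> C) (L : nat -> nat) (K r : R) :
  (0 <= r < 1)%R -> (forall N, (N <= L N)%nat) ->
  (forall N m, (m < L N)%nat -> (Cmod (g N m) <= K * r ^ m)%R) ->
  (forall m, is_Clim_seq (fun N => g N m) (h m)) ->
  exists H, is_Cseries h H /\ is_Clim_seq (fun N => Cpsum (g N) (L N)) H.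
Proof.
  intros Hr HL Hg Hh.
  assert (HK : (0 <= K)%R).
  { pose proof (Hg 1%nat 0%nat ltac:(specialize (HL 1%nat); lia)).
    pose proof (Cmod_ge_0 (g 1%nat 0%nat)). simpl in *. lra. }
  assert (Hhb : forall m, (Cmod (h m) <= K * r ^ m)%R).
  { intros m. apply (is_Clim_seq_Cmod_le _ _ _ (S m) (Hh m)). intros n Hn. apply Hg. specialize (HL n). lia. }
  destruct (is_Cseries_geom_dominated h K r Hr Hhb) as [H [HS Htail]].
  exists H. split; auto. intros eps He.
  destruct (geom_tail_small K r Hr HK (eps / 3) ltac:(lra)) as [M HM].
  destruct (is_Clim_seq_Cpsum g h M Hh (eps / 3)%R ltac:(lra)) as [N1 HN1].
  exists (max N1 M). intros N HN.
  eapply Rle_lt_trans; [apply (Cmod_triangle_minus _ (Cpsum (g N) M))|].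
  eapply Rle_lt_trans; [apply Rplus_le_compat_l; apply (Cmod_triangle_minus _ (Cpsum h M))|].
  assert (Hgtail : (Cmod (Cpsum (g N) (L N) - Cpsum (g N) M) <= K * r ^ M / (1 - r))%R).
  { replace (L N) with (M + (L N - M))%nat by (specialize (HL N); lia).
    apply Cpsum_block_geom_bound; auto. intros k Hk. apply Hg. specialize (HL N). lia. }
  specialize (HN1 N ltac:(lia)). specialize (Htail M). rewrite Cmod_minus_sym in Htail. lra.
Qed.

Lemma Cpow_m1_even k : (- (1)) ^ (2 * k) = 1.
Proof. rewrite Cpow_mult_r. replace ((- (1)) ^ 2) with (RtoC 1) by (simpl; ring). apply Cpow_1_l. Qed.

Lemma Cpow_m1_odd k : (- (1)) ^ (2 * k + 1) = - (1).
Proof. rewrite Cpow_add_r, Cpow_m1_even. simpl. ring. Qed.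

Lemma Cpow_m1_sqr n : (- (1)) ^ (n * n) = (- (1)) ^ n.
Proof.
  destruct (Nat.Even_or_Odd n) as [[p ->]|[p ->]].
  - replace (2 * p * (2 * p))%nat with (2 * (2 * p * p))%nat by lia. now rewrite !Cpow_m1_even.
  - replace ((2 * p + 1) * (2 * p + 1))%nat with (2 * (2 * p * p + 2 * p) + 1)%nat by lia.
    now rewrite !Cpow_m1_odd.
Qed.

Lemma Cpow_opp (x : C) n : (- x) ^ n = (- (1)) ^ n * x ^ n.
Proof. rewrite <- Cpow_mult_l. f_equal. ring. Qed.

Section EvenOddParts.

Variables (a : nat -> C) (K r : R).
Hypothesis Hr : (0 <= r < 1)%R.
Hypothesis Ha : forall n, (Cmod (a n) <= K * r ^ n)%R.

Lemma is_Cseries_even_part : is_Cseries (fun k => a (2 * k)%nat) (CSeries (fun k => a (2 * k)%nat)).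
Proof.
  destruct (is_Cseries_geom_dominated_subseq a K r (fun k => 2 * k)%nat Hr Ha) as [E HE];
    [intros; lia|]. now rewrite (is_Cseries_CSeries _ _ HE).
Qed.

Lemma is_Cseries_odd_part :
  is_Cseries (fun k => a (2 * k + 1)%nat) (CSeries (fun k => a (2 * k + 1)%nat)).
Proof.
  destruct (is_Cseries_geom_dominated_subseq a K r (fun k => 2 * k + 1)%nat Hr Ha) as [O HO];
    [intros; lia|]. now rewrite (is_Cseries_CSeries _ _ HO).
Qed.

Lemma is_Cseries_split_even_odd A : is_Cseries a A ->
  A = CSeries (fun k => a (2 * k)%nat) + CSeries (fun k => a (2 * k + 1)%nat).
Proof. intros H. exact (is_Cseries_even_odd _ _ _ _ H is_Cseries_even_part is_Cseries_odd_part). Qed.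

Lemma is_Cseries_alt_split_even_odd A : is_Cseries (fun k => (- (1)) ^ k * a k) A ->
  A = CSeries (fun k => a (2 * k)%nat) - CSeries (fun k => a (2 * k + 1)%nat).
Proof.
  intros H. apply (is_Cseries_even_odd _ _ _ _ H).
  - eapply is_Cseries_ext; [|exact is_Cseries_even_part]. intros k. rewrite Cpow_m1_even. ring.
  - replace (- CSeries (fun k => a (2 * k + 1)%nat))
      with (- (1) * CSeries (fun k => a (2 * k + 1)%nat)) by ring.
    eapply is_Cseries_ext; [|apply is_Cseries_scal, is_Cseries_odd_part].
    intros k. now rewrite Cpow_m1_odd.
Qed.

End EvenOddParts.

(** * q-Pochhammer symbols *)

Lemma Cmod_pow_S_lt_1 (x : C) k : (Cmod x < 1)%R -> (Cmod (x ^ S k) < 1)%R.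
Proof. intros H. rewrite Cmod_pow. apply pow_lt_1_compat; [split; [apply Cmod_ge_0|auto]|lia]. Qed.

Lemma Cmod_mult_lt_1 x y : (Cmod x < 1)%R -> (Cmod y < 1)%R -> (Cmod (x * y) < 1)%R.
Proof. intros Hx Hy. rewrite Cmod_mult. pose proof (Cmod_ge_0 x). pose proof (Cmod_ge_0 y). nra. Qed.

Lemma Cminus_1_neq_0 (x : C) : (Cmod x < 1)%R -> 1 - x <> 0.
Proof.
  intros H E. replace x with (1 - (1 - x)) in H by ring. rewrite E, Cminus_0_r, Cmod_1 in H. lra.
Qed.

Lemma Cpow_sqr (q : C) j : (q * q) ^ j = q ^ (2 * j).
Proof. rewrite Cpow_mult_l, <- Cpow_add_r. f_equal. lia. Qed.

Lemma qpoch_part_cv a q : (Cmod q < 1)%R -> is_Clim_seq (qpoch_part a q) (qpoch_inf a q).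
Proof.
  intros Hq.
  destruct (Cprod_one_plus_cv (fun k => - a * q ^ k) (Cmod a) (Cmod q)) as [L HL].
  - split; [apply Cmod_ge_0 | auto].
  - intros n. rewrite Cmod_mult, Cmod_opp, Cmod_pow. lra.
  - assert (HL' : is_Clim_seq (qpoch_part a q) L).
    { eapply is_Clim_seq_ext; [|exact HL]. intros n. rewrite qpoch_part_Cprod.
      apply Cprod_ext. intros. ring. }
    unfold qpoch_inf. now rewrite (is_Clim_seq_CLim _ _ HL').
Qed.

Lemma qpoch_part_split a q n m :
  qpoch_part a q (n + m) = qpoch_part a q n * qpoch_part (a * q ^ n) q m.
Proof.
  rewrite !qpoch_part_Cprod, Cprod_split. f_equal. apply Cprod_ext. intros.
  rewrite Cpow_add_r. ring.
Qed.

Lemma qpoch_inf_split a q n : (Cmod q < 1)%R ->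
  qpoch_inf a q = qpoch_part a q n * qpoch_inf (a * q ^ n) q.
Proof.
  intros Hq. apply (is_Clim_seq_unique (fun m => qpoch_part a q (n + m))).
  - eapply is_Clim_seq_ext; [|apply (is_Clim_seq_incr _ _ n (qpoch_part_cv a q Hq))].
    intros m. now rewrite Nat.add_comm.
  - eapply is_Clim_seq_ext; [intros m; symmetry; apply qpoch_part_split|].
    apply is_Clim_seq_scal, qpoch_part_cv, Hq.
Qed.

Lemma qpoch_inf_mult a b c q1 q2 q : (Cmod q1 < 1)%R -> (Cmod q2 < 1)%R -> (Cmod q < 1)%R ->
  (forall k, (1 - a * q1 ^ k) * (1 - b * q2 ^ k) = 1 - c * q ^ k) ->
  qpoch_inf a q1 * qpoch_inf b q2 = qpoch_inf c q.
Proof.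
  intros H1 H2 H3 H. apply (is_Clim_seq_unique (qpoch_part c q)).
  - eapply is_Clim_seq_ext; [|apply is_Clim_seq_mult; apply qpoch_part_cv; eauto].
    intros n. rewrite !qpoch_part_Cprod, <- Cprod_mult. apply Cprod_ext. auto.
  - now apply qpoch_part_cv.
Qed.

(* The partial products of [prod 1 / (1 - a q^k) = prod (1 + a q^k / (1 - a q^k))] also converge,
   and their product with those of [(a;q)] is constantly [1]. *)
Lemma qpoch_inf_neq_0 a q : (Cmod q < 1)%R -> (forall k, 1 - a * q ^ k <> 0) -> qpoch_inf a q <> 0.
Proof.
  intros Hq Hf.
  assert (Hc : is_Clim_seq (fun k => 1 - a * q ^ k) 1).
  { assert (H0 : is_Clim_seq (fun k => 1 - a * q ^ k) (1 - a * 0)).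
    { apply is_Clim_seq_minus; [apply is_Clim_seq_const | apply is_Clim_seq_scal, is_Clim_seq_pow, Hq]. }
    now replace (1 - a * 0) with (RtoC 1) in H0 by ring. }
  destruct (is_Clim_seq_Cmod_lb _ _ Hc ltac:(intro E; injection E; lra) Hf) as [d [Hd Hdn]].
  set (e := fun k => a * q ^ k / (1 - a * q ^ k)).
  destruct (Cprod_one_plus_cv e (Cmod a / d) (Cmod q)) as [L HL].
  - split; [apply Cmod_ge_0 | auto].
  - intros n. unfold e. rewrite Cmod_div, Cmod_mult, Cmod_pow by auto.
    specialize (Hdn n). pose proof (Cmod_ge_0 a). pose proof (pow_le (Cmod q) n (Cmod_ge_0 q)).
    unfold Rdiv. rewrite (Rmult_comm (Cmod a)), Rmult_assoc, (Rmult_comm _ (Cmod q ^ n)).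
    apply Rmult_le_compat_l; [nra|]. apply Rmult_le_compat_l; [auto|]. now apply Rinv_le_contravar.
  - intros E.
    assert (H0 : is_Clim_seq (fun n => qpoch_part a q n * Cprod (fun k => 1 + e k) n) 0).
    { replace (RtoC 0) with (qpoch_inf a q * L) by (rewrite E; ring).
      apply is_Clim_seq_mult; auto. now apply qpoch_part_cv. }
    assert (H1 : is_Clim_seq (fun n => qpoch_part a q n * Cprod (fun k => 1 + e k) n) 1).
    { refine (is_Clim_seq_ext (fun _ => RtoC 1) _ _ _ (is_Clim_seq_const _)). intros n.
      rewrite qpoch_part_Cprod, <- Cprod_mult, <- (Cpow_1_l n) at 1. rewrite <- Cprod_const.
      apply Cprod_ext. intros k _. unfold e. field. auto. }
    pose proof (is_Clim_seq_unique _ _ _ H0 H1) as E01. injection E01. lra.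
Qed.

Lemma qpoch_part_QQ_neq_0 (Q : C) n : (Cmod Q < 1)%R -> qpoch_part Q Q n <> 0.
Proof.
  intros H. rewrite qpoch_part_Cprod. apply Cprod_neq_0. intros k _.
  apply Cminus_1_neq_0. rewrite <- Cpow_S. now apply Cmod_pow_S_lt_1.
Qed.

Lemma qpoch_inf_QQ_neq_0 (Q : C) : (Cmod Q < 1)%R -> qpoch_inf Q Q <> 0.
Proof.
  intros H. apply qpoch_inf_neq_0; auto. intros k.
  apply Cminus_1_neq_0. rewrite <- Cpow_S. now apply Cmod_pow_S_lt_1.
Qed.

Lemma qpoch_inf_even_odd (x : C) : (Cmod x < 1)%R ->
  qpoch_inf x x = qpoch_inf x (x * x) * qpoch_inf (x * x) (x * x).
Proof.
  intros Hx. pose proof (Cmod_mult_lt_1 x x Hx Hx) as Hxx.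
  apply (is_Clim_seq_unique (fun N => qpoch_part x x (2 * N))).
  - apply (is_Clim_seq_subseq (qpoch_part x x) _ (fun N => 2 * N)%nat); [intros; lia|].
    now apply qpoch_part_cv.
  - eapply is_Clim_seq_ext; [|apply is_Clim_seq_mult; apply qpoch_part_cv; auto].
    intros N. rewrite !qpoch_part_Cprod, (Cprod_even_odd _ N).
    f_equal; apply Cprod_ext; intros k _; rewrite Cpow_sqr; [auto|].
    rewrite Nat.add_1_r, Cpow_S. ring.
Qed.

(* From [(-x;x) (x;x) = (x^2;x^2)] and [(x;x) = (x;x^2) (x^2;x^2)]. *)
Lemma euler_identity (x : C) : (Cmod x < 1)%R -> qpoch_inf (- x) x * qpoch_inf x (x * x) = 1.
Proof.
  intros Hx. pose proof (Cmod_mult_lt_1 x x Hx Hx) as Hxx.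
  assert (E1 : qpoch_inf (- x) x * qpoch_inf x x = qpoch_inf (x * x) (x * x)).
  { apply qpoch_inf_mult; auto. intros k. rewrite Cpow_mult_l. ring. }
  pose proof (qpoch_inf_even_odd x Hx) as E2.
  assert (HC : qpoch_inf (x * x) (x * x) <> 0).
  { intro E. apply (qpoch_inf_QQ_neq_0 x Hx). rewrite E2, E. ring. }
  replace (qpoch_inf (- x) x * qpoch_inf x (x * x)) with
    (qpoch_inf (- x) x * (qpoch_inf x (x * x) * qpoch_inf (x * x) (x * x)) / qpoch_inf (x * x) (x * x))
    by (field; auto).
  rewrite <- E2, E1. field. auto.
Qed.

(** * Gaussian binomial coefficients *)

Fixpoint gauss_binom (Q : C) (M k : nat) : C :=
  match M, k with
  | _, O => 1
  | O, S _ => 0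
  | S M', S k' => gauss_binom Q M' (S k') + Q ^ (M' - k') * gauss_binom Q M' k'
  end.

Lemma gauss_binom_0_r Q M : gauss_binom Q M 0 = 1.
Proof. now destruct M. Qed.

Lemma gauss_binom_gt Q M k : (M < k)%nat -> gauss_binom Q M k = 0.
Proof.
  revert k. induction M as [|M IH]; intros k Hk; destruct k; try lia; simpl; auto.
  rewrite !IH by lia. ring.
Qed.

Lemma qpoch_part_QQ_S Q n : qpoch_part Q Q (S n) = qpoch_part Q Q n * (1 - Q ^ S n).
Proof. simpl. now rewrite pow_n_Cpow. Qed.

Lemma gauss_binom_qpoch Q M k : (k <= M)%nat ->
  gauss_binom Q M k * qpoch_part Q Q k * qpoch_part Q Q (M - k) = qpoch_part Q Q M.
Proof.
  revert k. induction M as [|M IH]; intros k Hk.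
  - destruct k; [simpl; ring | lia].
  - destruct k as [|k]; [rewrite gauss_binom_0_r, Nat.sub_0_r; simpl; ring|].
    simpl gauss_binom. rewrite Nat.sub_succ.
    destruct (Nat.eq_dec k M) as [->|Hne].
    + rewrite gauss_binom_gt, Nat.sub_diag by lia. specialize (IH M (le_n M)).
      rewrite Nat.sub_diag in IH. rewrite qpoch_part_QQ_S. simpl (Q ^ 0).
      transitivity (gauss_binom Q M M * qpoch_part Q Q M * qpoch_part Q Q 0 * (1 - Q ^ S M));
        [simpl; ring | now rewrite IH].
    + pose proof (IH (S k) ltac:(lia)) as I1. pose proof (IH k ltac:(lia)) as I2.
      replace (M - k)%nat with (S (M - S k)) in I2 |- * by lia.
      rewrite (qpoch_part_QQ_S Q k) in I1 |- *. rewrite (qpoch_part_QQ_S Q (M - S k)) in I2 |- *.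
      rewrite (qpoch_part_QQ_S Q M).
      replace (Q ^ S M) with (Q ^ S k * Q ^ S (M - S k)) by (rewrite <- Cpow_add_r; f_equal; lia).
      set (s := Q ^ S k) in *. set (t := Q ^ S (M - S k)) in *. clearbody s t.
      transitivity ((1 - t) * (gauss_binom Q M (S k) * (qpoch_part Q Q k * (1 - s)) * qpoch_part Q Q (M - S k))
        + t * (1 - s) * (gauss_binom Q M k * qpoch_part Q Q k * (qpoch_part Q Q (M - S k) * (1 - t)))).
      * ring.
      * rewrite I1, I2. ring.
Qed.

Lemma gauss_binom_S_S Q M k :
  gauss_binom Q (S M) (S k) = gauss_binom Q M (S k) + Q ^ (M - k) * gauss_binom Q M k.
Proof. reflexivity. Qed.

Lemma rothe (q y : C) M :
  Cprod (fun j => y + q ^ (2 * j)) M =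
  Cpsum (fun k => gauss_binom (q * q) M k * q ^ (k * (k - 1)) * y ^ (M - k)) (S M).
Proof.
  induction M as [|M IH]; [simpl; ring|].
  set (T := fun k => gauss_binom (q * q) M k * q ^ (k * (k - 1)) * y ^ (M - k)).
  change (Cprod (fun j => y + q ^ (2 * j)) M * (y + q ^ (2 * M)) =
    Cpsum (fun k => gauss_binom (q * q) (S M) k * q ^ (k * (k - 1)) * y ^ (S M - k)) (S (S M))).
  rewrite IH. fold T.
  rewrite (Cpsum_S_l (fun k => gauss_binom (q * q) (S M) k * q ^ (k * (k - 1)) * y ^ (S M - k))).
  assert (Hsplit : forall k, (k < S M)%nat ->
    gauss_binom (q * q) (S M) (S k) * q ^ (S k * (S k - 1)) * y ^ (S M - S k) =
    gauss_binom (q * q) M (S k) * q ^ (S k * (S k - 1)) * y ^ (M - k) + q ^ (2 * M) * T k).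
  { intros k Hk. unfold T. rewrite gauss_binom_S_S, Cpow_sqr. replace (S M - S k)%nat with (M - k)%nat by lia.
    assert (Hexp : q ^ (2 * (M - k)) * q ^ (S k * (S k - 1)) = q ^ (2 * M) * q ^ (k * (k - 1))).
    { rewrite <- !Cpow_add_r. f_equal. destruct k; simpl; nia. }
    transitivity (gauss_binom (q * q) M (S k) * q ^ (S k * (S k - 1)) * y ^ (M - k)
      + (q ^ (2 * (M - k)) * q ^ (S k * (S k - 1))) * gauss_binom (q * q) M k * y ^ (M - k));
      [ring | rewrite Hexp; ring]. }
  rewrite (Cpsum_ext _ _ _ Hsplit), Cpsum_plus, Cpsum_scal.
  set (A := fun k => gauss_binom (q * q) M (S k) * q ^ (S k * (S k - 1)) * y ^ (M - k)).
  replace (Cpsum A (S M)) with (Cpsum A M) by (simpl; unfold A; rewrite gauss_binom_gt by lia; ring).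
  rewrite (Cpsum_S_l T).
  assert (Hy : forall k, (k < M)%nat ->
    gauss_binom (q * q) M (S k) * q ^ (S k * (S k - 1)) * y ^ (M - k) = y * T (S k)).
  { intros k Hk. unfold T. replace (M - k)%nat with (S (M - S k)) by lia. simpl. ring. }
  unfold A. rewrite (Cpsum_ext _ _ _ Hy), Cpsum_scal. unfold T. rewrite gauss_binom_0_r, Nat.sub_0_r. simpl. ring.
Qed.

Section GaussBinomLimits.

Variable Q : C.
Hypothesis HQ : (Cmod Q < 1)%R.

Lemma gauss_binom_eq M k : (k <= M)%nat ->
  gauss_binom Q M k = qpoch_part Q Q M / (qpoch_part Q Q k * qpoch_part Q Q (M - k)).
Proof.
  intros Hk. rewrite <- (gauss_binom_qpoch Q M k Hk). field.
  split; apply qpoch_part_QQ_neq_0; auto.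
Qed.

Lemma gauss_binom_sym M k : (k <= M)%nat -> gauss_binom Q M k = gauss_binom Q M (M - k).
Proof.
  intros Hk. rewrite !gauss_binom_eq by lia. replace (M - (M - k))%nat with k by lia.
  now rewrite Cmult_comm.
Qed.

Lemma gauss_binom_bounded : exists B,
  forall M k, (k <= M)%nat -> (Cmod (gauss_binom Q M k) <= B)%R.
Proof.
  pose proof (qpoch_part_cv Q Q HQ) as Hcv.
  destruct (is_Clim_seq_bounded _ _ Hcv) as [U [HU0 HU]].
  destruct (is_Clim_seq_Cmod_lb _ _ Hcv (qpoch_inf_QQ_neq_0 Q HQ)
             (fun n => qpoch_part_QQ_neq_0 Q n HQ)) as [d [Hd Hdn]].
  exists (U / (d * d))%R. intros M k Hk. rewrite gauss_binom_eq, Cmod_div, Cmod_mult by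
    (auto; apply Cmult_neq_0; apply qpoch_part_QQ_neq_0; auto).
  pose proof (Hdn k). pose proof (Hdn (M - k)%nat).
  unfold Rdiv. apply Rmult_le_compat; auto; [apply Cmod_ge_0 | |].
  - left; apply Rinv_0_lt_compat. apply Rmult_lt_0_compat; lra.
  - apply Rinv_le_contravar; [nra | apply Rmult_le_compat; lra].
Qed.

Lemma gauss_binom_center_cv m :
  is_Clim_seq (fun N => gauss_binom Q (2 * N) (N + m)) (/ qpoch_inf Q Q).
Proof.
  pose proof (qpoch_part_cv Q Q HQ) as Hcv. pose proof (qpoch_inf_QQ_neq_0 Q HQ) as Hnz.
  apply is_Clim_seq_ext_loc with
    (fun N => qpoch_part Q Q (2 * N) * / (qpoch_part Q Q (N + m) * qpoch_part Q Q (N - m))).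
  { exists m. intros N HN. rewrite gauss_binom_eq by lia.
    now replace (2 * N - (N + m))%nat with (N - m)%nat by lia. }
  replace (/ qpoch_inf Q Q) with (qpoch_inf Q Q * / (qpoch_inf Q Q * qpoch_inf Q Q)) by (field; auto).
  apply is_Clim_seq_mult.
  - apply (is_Clim_seq_subseq _ _ (fun N => 2 * N)%nat); [intros; lia | auto].
  - apply is_Clim_seq_inv.
    + apply is_Clim_seq_mult; [now apply is_Clim_seq_incr | now apply is_Clim_seq_decr].
    + now apply Cmult_neq_0.
    + intros n. apply Cmult_neq_0; now apply qpoch_part_QQ_neq_0.
Qed.

Lemma gauss_binom_center_cv_below m :
  is_Clim_seq (fun N => gauss_binom Q (2 * N) (N - 1 - m)) (/ qpoch_inf Q Q).
Proof.
  apply is_Clim_seq_ext_loc with (fun N => gauss_binom Q (2 * N) (N + S m)).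
  - exists (S m). intros N HN. rewrite gauss_binom_sym by lia. f_equal. lia.
  - apply gauss_binom_center_cv.
Qed.

End GaussBinomLimits.

(** * The Jacobi triple product identity *)

Ltac nat_ring :=
  apply Nat2Z.inj;
  repeat first [ rewrite Nat2Z.inj_mul | rewrite Nat2Z.inj_add | rewrite Nat2Z.inj_sub by lia
               | rewrite Nat2Z.inj_succ ];
  unfold Z.succ; ring.

Lemma Cprod_pow_even (q : C) N : Cprod (fun j => q ^ (2 * j)) N = q ^ (N * (N - 1)).
Proof.
  induction N as [|N IH]; auto. cbn [Cprod]. rewrite IH, <- Cpow_add_r. f_equal.
  destruct N; [auto | nat_ring].
Qed.

Definition odd_product (q : C) (N : nat) : C := Cprod (fun j => 1 + q ^ (2 * j + 1)) N.

(* Factor [q^(2j)] out of the first [N] factors and [q^(2N-1)] out of the last [N]. *)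
Lemma rothe_at_odd_power (q : C) N : (1 <= N)%nat ->
  Cprod (fun j => q ^ (2 * N - 1) + q ^ (2 * j)) (2 * N) =
  q ^ (N * (2 * N - 1) + N * (N - 1)) * odd_product q N ^ 2.
Proof.
  intros HN. replace (2 * N)%nat with (N + N)%nat at 1 by lia. rewrite Cprod_split.
  rewrite (Cprod_ext (fun j => q ^ (2 * N - 1) + q ^ (2 * j))
             (fun j => q ^ (2 * j) * (fun i => 1 + q ^ (2 * i + 1)) (N - 1 - j)%nat)).
  2: { intros j Hj. rewrite Cmult_plus_distr_l, <- Cpow_add_r, Cmult_1_r.
       rewrite (Cplus_comm (q ^ (2 * N - 1))). f_equal. f_equal. nat_ring. }
  rewrite (Cprod_ext (fun j => q ^ (2 * N - 1) + q ^ (2 * (N + j)))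
             (fun j => q ^ (2 * N - 1) * (1 + q ^ (2 * j + 1)))).
  2: { intros j Hj. rewrite Cmult_plus_distr_l, <- Cpow_add_r, Cmult_1_r. f_equal. f_equal. nat_ring. }
  rewrite !Cprod_mult, !Cprod_const, Cprod_pow_even, Cpow_add_r, <- Cpow_mult_r,
    (Nat.mul_comm (2 * N - 1) N).
  replace (Cprod (fun k => 1 + q ^ (2 * (N - 1 - k) + 1)) N) with (odd_product q N)
    by (symmetry; apply (Cprod_rev (fun i => 1 + q ^ (2 * i + 1)))).
  unfold odd_product. ring.
Qed.

(* Rothe's formula at [y = q^(2N-1)]: the term of index [k] carries [q^((k - N)^2)], so the sum
   splits into the indices below [N] and those from [N] on. *)
Lemma odd_product_sqr (q : C) N : q <> 0 -> (1 <= N)%nat ->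
  odd_product q N ^ 2 =
  Cpsum (fun m => gauss_binom (q * q) (2 * N) (N - 1 - m) * q ^ ((m + 1) * (m + 1))) N +
  Cpsum (fun m => gauss_binom (q * q) (2 * N) (N + m) * q ^ (m * m)) (N + 1).
Proof.
  intros Hq HN.
  set (e := (N * (2 * N - 1) + N * (N - 1))%nat).
  set (T := fun k => gauss_binom (q * q) (2 * N) k * q ^ (k * (k - 1)) * (q ^ (2 * N - 1)) ^ (2 * N - k)).
  assert (HT : forall k, T k = gauss_binom (q * q) (2 * N) k *
                 q ^ (k * (k - 1) + (2 * N - 1) * (2 * N - k))).
  { intros k. unfold T. rewrite Cpow_add_r, (Cpow_mult_r q (2 * N - 1)). ring. }
  assert (Hlo : forall m, (m < N)%nat ->
    T (N - 1 - m)%nat = q ^ e * (gauss_binom (q * q) (2 * N) (N - 1 - m) * q ^ ((m + 1) * (m + 1)))).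
  { intros m Hm. rewrite HT, (Cmult_comm (q ^ e)), <- Cmult_assoc, <- Cpow_add_r. do 2 f_equal.
    unfold e. destruct (Nat.eq_dec m (N - 1)) as [->|].
    - replace (N - 1 - (N - 1))%nat with 0%nat by lia. simpl. nat_ring.
    - nat_ring. }
  assert (Hhi : forall m, (m < N + 1)%nat ->
    T (N + m)%nat = q ^ e * (gauss_binom (q * q) (2 * N) (N + m) * q ^ (m * m))).
  { intros m Hm. rewrite HT, (Cmult_comm (q ^ e)), <- Cmult_assoc, <- Cpow_add_r. do 2 f_equal.
    unfold e. nat_ring. }
  assert (He : q ^ e <> 0) by now apply Cpow_nz.
  apply (Cmult_cancel_l (q ^ e)); auto.
  unfold e at 1. rewrite <- (rothe_at_odd_power q N HN), rothe, Cmult_plus_distr_l, <- !Cpsum_scal.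
  fold T. replace (S (2 * N)) with (N + (N + 1))%nat by lia.
  rewrite Cpsum_split, <- Cpsum_rev. f_equal; apply Cpsum_ext; auto.
Qed.

Definition theta_pos (q : C) : C := CSeries (fun m => q ^ (S m * S m)).

Lemma Cmod_pow_le (q : C) m n : (Cmod q < 1)%R -> (m <= n)%nat -> (Cmod (q ^ n) <= 1 * Cmod q ^ m)%R.
Proof.
  intros H Hm. rewrite Cmod_pow, Rmult_1_l. apply pow_decr; auto. split; [apply Cmod_ge_0 | lra].
Qed.

Lemma theta_pos_is_Cseries q : (Cmod q < 1)%R -> is_Cseries (fun m => q ^ (S m * S m)) (theta_pos q).
Proof.
  intros H. destruct (is_Cseries_geom_dominated (fun m => q ^ (S m * S m)) 1 (Cmod q)) as [A [HA _]].
  - split; [apply Cmod_ge_0 | auto].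
  - intros n. apply Cmod_pow_le; auto. nia.
  - unfold theta_pos. now rewrite (is_Cseries_CSeries _ _ HA).
Qed.

Lemma theta_is_Cseries q : (Cmod q < 1)%R -> is_Cseries (fun m => q ^ (m * m)) (1 + theta_pos q).
Proof. intros H. apply (is_Cseries_cons (fun m => q ^ (m * m))), theta_pos_is_Cseries, H. Qed.

Lemma qpoch_part_odd_product q N : qpoch_part (- q) (q * q) N = odd_product q N.
Proof.
  rewrite qpoch_part_Cprod. apply Cprod_ext. intros j _.
  rewrite Cpow_sqr, Nat.add_1_r, Cpow_S. ring.
Qed.

Lemma qpoch_inf_0_l q : qpoch_inf 0 q = 1.
Proof.
  apply is_Clim_seq_CLim, (is_Clim_seq_ext (fun _ => RtoC 1)); [|apply is_Clim_seq_const].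
  intros n. rewrite qpoch_part_Cprod, <- (Cpow_1_l n), <- Cprod_const at 1.
  apply Cprod_ext. intros. ring.
Qed.

Lemma theta_pos_0 : theta_pos 0 = 0.
Proof.
  apply is_Cseries_CSeries, (is_Clim_seq_ext (fun _ => RtoC 0)); [|apply is_Clim_seq_const].
  intros n. rewrite (Cpsum_ext _ (fun _ => 0)) by (intros; simpl; ring).
  induction n as [|n IH]; [reflexivity|]. simpl. rewrite <- IH. ring.
Qed.

Theorem jacobi_triple_product (q : C) : (Cmod q < 1)%R ->
  qpoch_inf (q * q) (q * q) * qpoch_inf (- q) (q * q) * qpoch_inf (- q) (q * q) = 1 + 2 * theta_pos q.
Proof.
  intros Hq. destruct (Ceq_dec q 0) as [->|Hq0].
  { replace (- 0) with (RtoC 0) by ring. replace (0 * 0) with (RtoC 0) by ring.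
    rewrite !qpoch_inf_0_l, theta_pos_0. ring. }
  set (Q := q * q). assert (HQ : (Cmod Q < 1)%R) by now apply Cmod_mult_lt_1.
  set (PQ := qpoch_inf Q Q). assert (HPQ : PQ <> 0) by now apply qpoch_inf_QQ_neq_0.
  assert (Hr : (0 <= Cmod q < 1)%R) by (split; [apply Cmod_ge_0 | auto]).
  destruct (gauss_binom_bounded Q HQ) as [B HB].
  destruct (tannery (fun N m => gauss_binom Q (2 * N) (N - 1 - m) * q ^ ((m + 1) * (m + 1)))
              (fun m => / PQ * q ^ ((m + 1) * (m + 1))) (fun N => N) B (Cmod q) Hr)
    as [Hlo [HSlo HClo]].
  { intros; lia. }
  { intros N m Hm. rewrite Cmod_mult. apply Rmult_le_compat; try apply Cmod_ge_0.
    - apply HB. lia.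
    - rewrite Cmod_pow. apply pow_decr; [lra | nia]. }
  { intros m. apply is_Clim_seq_mult; [now apply gauss_binom_center_cv_below | apply is_Clim_seq_const]. }
  destruct (tannery (fun N m => gauss_binom Q (2 * N) (N + m) * q ^ (m * m))
              (fun m => / PQ * q ^ (m * m)) (fun N => (N + 1)%nat) B (Cmod q) Hr)
    as [Hhi [HShi HChi]].
  { intros; lia. }
  { intros N m Hm. rewrite Cmod_mult. apply Rmult_le_compat; try apply Cmod_ge_0.
    - apply HB. lia.
    - rewrite Cmod_pow. apply pow_decr; [lra | nia]. }
  { intros m. apply is_Clim_seq_mult; [now apply gauss_binom_center_cv | apply is_Clim_seq_const]. }
  assert (Hsqr : qpoch_inf (- q) Q * qpoch_inf (- q) Q = Hlo + Hhi).
  { apply (is_Clim_seq_unique (fun N => qpoch_part (- q) Q N * qpoch_part (- q) Q N)).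
    - apply is_Clim_seq_mult; now apply qpoch_part_cv.
    - eapply is_Clim_seq_ext_loc; [|apply is_Clim_seq_plus; [exact HClo | exact HChi]].
      exists 1%nat. intros N HN. unfold Q. rewrite <- (odd_product_sqr q N Hq0 HN), qpoch_part_odd_product.
      simpl. ring. }
  assert (Elo : Hlo = / PQ * theta_pos q).
  { apply (is_Cseries_unique _ _ _ HSlo), is_Cseries_scal.
    eapply is_Cseries_ext; [|now apply theta_pos_is_Cseries]. intros m. now rewrite Nat.add_1_r. }
  assert (Ehi : Hhi = / PQ * (1 + theta_pos q))
    by (apply (is_Cseries_unique _ _ _ HShi), is_Cseries_scal, theta_is_Cseries, Hq).
  rewrite <- Cmult_assoc, Hsqr, Elo, Ehi. field. auto.
Qed.

(** * The q-binomial theorem *)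

Section QBinomial.

Variable Q : C.
Hypothesis HQ : (Cmod Q < 1)%R.

Definition qbinom_coef (n : nat) : C := qpoch_part (-1) Q n / qpoch_part Q Q n.

Definition qbinom_series (z : C) : C := CSeries (fun n => qbinom_coef n * z ^ n).

Lemma qbinom_coef_0 : qbinom_coef 0 = 1.
Proof. unfold qbinom_coef. simpl. field. Qed.

Lemma qbinom_coef_S n : qbinom_coef (S n) * (1 - Q ^ S n) = qbinom_coef n * (1 + Q ^ n).
Proof.
  unfold qbinom_coef. simpl qpoch_part. rewrite !pow_n_Cpow, Cpow_S.
  assert (HS : 1 - Q * Q ^ n <> 0) by (rewrite <- Cpow_S; apply Cminus_1_neq_0, Cmod_pow_S_lt_1, HQ).
  field. split; [apply qpoch_part_QQ_neq_0, HQ | exact HS].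
Qed.

Lemma qbinom_coef_bounded : exists K, (0 <= K)%R /\ forall n, (Cmod (qbinom_coef n) <= K)%R.
Proof.
  destruct (is_Clim_seq_bounded _ _ (qpoch_part_cv (-1) Q HQ)) as [U [HU0 HU]].
  destruct (is_Clim_seq_Cmod_lb _ _ (qpoch_part_cv Q Q HQ) (qpoch_inf_QQ_neq_0 Q HQ)
             (fun n => qpoch_part_QQ_neq_0 Q n HQ)) as [d [Hd Hdn]].
  exists (U / d)%R. split; [apply Rdiv_le_0_compat; lra|].
  intros n. unfold qbinom_coef. rewrite Cmod_div by (apply qpoch_part_QQ_neq_0, HQ).
  specialize (Hdn n). unfold Rdiv. apply Rmult_le_compat; auto; [apply Cmod_ge_0 | |].
  - left; apply Rinv_0_lt_compat; lra.
  - now apply Rinv_le_contravar.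
Qed.

Lemma qbinom_series_is_Cseries z : (Cmod z < 1)%R ->
  is_Cseries (fun n => qbinom_coef n * z ^ n) (qbinom_series z).
Proof.
  intros Hz. destruct qbinom_coef_bounded as [K [HK0 HK]].
  destruct (is_Cseries_geom_dominated (fun n => qbinom_coef n * z ^ n) K (Cmod z)) as [A [HA _]].
  - split; [apply Cmod_ge_0 | auto].
  - intros n. rewrite Cmod_mult, Cmod_pow. apply Rmult_le_compat_r; auto. apply pow_le, Cmod_ge_0.
  - unfold qbinom_series. now rewrite (is_Cseries_CSeries _ _ HA).
Qed.

Lemma qbinom_series_sub_1 K z : (forall n, (Cmod (qbinom_coef n) <= K)%R) -> (Cmod z < 1)%R ->
  (Cmod (qbinom_series z - 1) <= K * Cmod z / (1 - Cmod z))%R.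
Proof.
  intros HK Hz.
  destruct (is_Cseries_geom_dominated (fun n => qbinom_coef n * z ^ n) K (Cmod z)) as [A [HA Htail]].
  - split; [apply Cmod_ge_0 | auto].
  - intros n. rewrite Cmod_mult, Cmod_pow. apply Rmult_le_compat_r; auto. apply pow_le, Cmod_ge_0.
  - unfold qbinom_series. rewrite (is_Cseries_CSeries _ _ HA).
    specialize (Htail 1%nat). simpl Cpsum in Htail. rewrite qbinom_coef_0, pow_1 in Htail.
    now replace (0 + 1 * 1) with (RtoC 1) in Htail by ring.
Qed.

Lemma qbinom_series_shift z : (Cmod z < 1)%R ->
  qbinom_series z * (1 - z) = qbinom_series (Q * z) * (1 + z).
Proof.
  intros Hz. assert (HQz : (Cmod (Q * z) < 1)%R) by now apply Cmod_mult_lt_1.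
  set (a := fun n => qbinom_coef n * z ^ n). set (b := fun n => qbinom_coef n * (Q * z) ^ n).
  assert (Hfin : forall N, Cpsum (fun n => a n - b n) (S N) = z * Cpsum (fun n => a n + b n) N).
  { induction N as [|N IH]; [unfold a, b; simpl; ring|].
    change (Cpsum (fun n => a n - b n) (S N) + (a (S N) - b (S N)) =
            z * (Cpsum (fun n => a n + b n) N + (a N + b N))).
    assert (Hstep : a (S N) - b (S N) = z * (a N + b N)).
    { unfold a, b. rewrite !Cpow_mult_l.
      transitivity (z ^ S N * (qbinom_coef (S N) * (1 - Q ^ S N))); [ring|].
      rewrite qbinom_coef_S, Cpow_S. ring. }
    rewrite IH, Hstep. ring. }
  assert (E : qbinom_series z - qbinom_series (Q * z) = z * (qbinom_series z + qbinom_series (Q * z))).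
  { apply (is_Clim_seq_unique (fun N => Cpsum (fun n => a n - b n) (S N))).
    - apply (is_Clim_seq_subseq (Cpsum _) _ S); auto.
      apply is_Cseries_minus; now apply qbinom_series_is_Cseries.
    - eapply is_Clim_seq_ext; [intros N; symmetry; apply Hfin|].
      apply is_Clim_seq_scal, is_Cseries_plus; now apply qbinom_series_is_Cseries. }
  transitivity (qbinom_series (Q * z) * (1 + z) + ((qbinom_series z - qbinom_series (Q * z))
    - z * (qbinom_series z + qbinom_series (Q * z)))); [ring | rewrite E; ring].
Qed.

Lemma qbinom_series_iter z N : (Cmod z < 1)%R ->
  qbinom_series z * qpoch_part z Q N = qpoch_part (- z) Q N * qbinom_series (z * Q ^ N).
Proof.
  intros Hz. induction N as [|N IH]; [simpl; rewrite (Cmult_1_r z); ring|].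
  simpl qpoch_part. rewrite pow_n_Cpow.
  assert (Hw : (Cmod (z * Q ^ N) < 1)%R).
  { rewrite Cmod_mult, Cmod_pow. pose proof (pow_le_1 (Cmod Q) N ltac:(split; [apply Cmod_ge_0 | lra])).
    pose proof (Cmod_ge_0 z). nra. }
  pose proof (qbinom_series_shift (z * Q ^ N) Hw) as Ef.
  replace (Q * (z * Q ^ N)) with (z * Q ^ S N) in Ef by (rewrite Cpow_S; ring).
  transitivity ((qbinom_series z * qpoch_part z Q N) * (1 - z * Q ^ N)); [ring|].
  rewrite IH.
  transitivity (qpoch_part (- z) Q N * (qbinom_series (z * Q ^ N) * (1 - z * Q ^ N))); [ring|].
  rewrite Ef. ring.
Qed.

Lemma qbinom_series_cv_1 z : (Cmod z < 1)%R -> is_Clim_seq (fun N => qbinom_series (z * Q ^ N)) 1.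
Proof.
  intros Hz. destruct qbinom_coef_bounded as [K [HK0 HK]].
  pose proof (Cmod_ge_0 z) as Hz0.
  intros eps He.
  destruct (pow_eventually_lt (Cmod Q) ltac:(split; [apply Cmod_ge_0 | auto])
              (eps * (1 - Cmod z) / ((K + 1) * (Cmod z + 1)))%R) as [N0 HN0].
  { apply Rdiv_lt_0_compat; apply Rmult_lt_0_compat; lra. }
  exists N0. intros N HN. specialize (HN0 N HN).
  pose proof (pow_le (Cmod Q) N (Cmod_ge_0 Q)) as HQN0.
  pose proof (pow_le_1 (Cmod Q) N ltac:(split; [apply Cmod_ge_0 | lra])) as HQN1.
  assert (Hw : Cmod (z * Q ^ N) = (Cmod z * Cmod Q ^ N)%R) by now rewrite Cmod_mult, Cmod_pow.
  assert (Hw1 : (Cmod (z * Q ^ N) <= Cmod z)%R) by (rewrite Hw; nra).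
  eapply Rle_lt_trans; [apply qbinom_series_sub_1; [exact HK | lra]|]. rewrite Hw.
  apply Rle_lt_trans with ((K + 1) * (Cmod z + 1) * Cmod Q ^ N / (1 - Cmod z))%R.
  - assert (Hpos : (0 <= Cmod z * Cmod Q ^ N)%R) by (apply Rmult_le_pos; lra).
    unfold Rdiv. apply Rmult_le_compat.
    + apply Rmult_le_pos; lra.
    + left; apply Rinv_0_lt_compat; lra.
    + nra.
    + apply Rinv_le_contravar; nra.
  - apply Rlt_le_trans with
      ((K + 1) * (Cmod z + 1) * (eps * (1 - Cmod z) / ((K + 1) * (Cmod z + 1))) / (1 - Cmod z))%R.
    + unfold Rdiv. apply Rmult_lt_compat_r; [apply Rinv_0_lt_compat; lra|].
      apply Rmult_lt_compat_l; [nra | exact HN0].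
    + right. field. split; lra.
Qed.

Theorem q_binomial_theorem z : (Cmod z < 1)%R -> qbinom_series z * qpoch_inf z Q = qpoch_inf (- z) Q.
Proof.
  intros Hz. apply (is_Clim_seq_unique (fun N => qbinom_series z * qpoch_part z Q N)).
  - apply is_Clim_seq_scal, qpoch_part_cv, HQ.
  - eapply is_Clim_seq_ext; [intros N; symmetry; apply qbinom_series_iter, Hz|].
    rewrite <- (Cmult_1_r (qpoch_inf (- z) Q)).
    apply is_Clim_seq_mult; [apply qpoch_part_cv, HQ | apply qbinom_series_cv_1, Hz].
Qed.

End QBinomial.

(** * Evaluation at [z = i] *)

Lemma Ci_sqr : Ci * Ci = - (1).
Proof. apply injective_projections; simpl; ring. Qed.

Lemma qpoch_inf_mult_opp a q : (Cmod q < 1)%R ->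
  qpoch_inf a q * qpoch_inf (- a) q = qpoch_inf (a * a) (q * q).
Proof.
  intros Hq. apply qpoch_inf_mult; auto using Cmod_mult_lt_1. intros k. rewrite Cpow_mult_l. ring.
Qed.

Lemma qbinom_coef_S_eq Q m :
  qbinom_coef Q (S m) = 2 * qpoch_part (- Q) Q m / qpoch_part Q Q (S m).
Proof.
  unfold qbinom_coef. rewrite <- Nat.add_1_l, qpoch_part_split. simpl.
  unfold Cdiv. f_equal. replace (-1 * (Q * 1)) with (- Q) by ring.
  change (@one C_Ring) with (RtoC 1). ring.
Qed.

Definition sbar_factor (q : C) : C := qpoch_inf (q * q) (q * q) * qpoch_inf (q * q) (q * q * (q * q)).

Definition Sbar_term (z q : C) (n : nat) : C :=
  pow_n q n * qpoch_inf (- pow_n q (n + 1)) q * qpoch_inf (pow_n q (n + 1)) q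
    / (qpoch_inf (z * pow_n q n) q * qpoch_inf (/ z * pow_n q n) q).

(* At [z = i] the two pairs of products combine into products in base [Q = q^2], and Euler's
   identity turns [1 / (-Q^n;Q)_oo] into a finite product times [(Q;Q^2)_oo]. *)
Lemma Sbar_term_i (q : C) n : (Cmod q < 1)%R -> (1 <= n)%nat ->
  Sbar_term Ci q n = sbar_factor q / 2 * (qbinom_coef (q * q) n * q ^ n).
Proof.
  intros Hq Hn. unfold sbar_factor. set (Q := q * q).
  assert (HQ : (Cmod Q < 1)%R) by now apply Cmod_mult_lt_1.
  destruct n as [|m]; [lia|]. set (n := S m).
  unfold Sbar_term. rewrite !(pow_n_Cpow q n), !(pow_n_Cpow q (n + 1)).
  assert (Ea : qpoch_inf (- q ^ (n + 1)) q * qpoch_inf (q ^ (n + 1)) q = qpoch_inf (Q ^ (n + 1)) Q).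
  { rewrite Cmult_comm, qpoch_inf_mult_opp, <- Cpow_mult_l by auto. reflexivity. }
  assert (Eb : qpoch_inf (Ci * q ^ n) q * qpoch_inf (/ Ci * q ^ n) q = qpoch_inf (- Q ^ n) Q).
  { rewrite Ci_inv. replace (- Ci * q ^ n) with (- (Ci * q ^ n)) by ring.
    rewrite qpoch_inf_mult_opp by auto. f_equal. unfold Q. rewrite Cpow_mult_l.
    transitivity ((Ci * Ci) * (q ^ n * q ^ n)); [ring|]. rewrite Ci_sqr. ring. }
  set (X := qpoch_inf (Q ^ (n + 1)) Q). set (Y := qpoch_inf (- Q ^ n) Q).
  assert (HX : qpoch_inf Q Q = qpoch_part Q Q n * X).
  { unfold X. rewrite (qpoch_inf_split Q Q n HQ), <- Cpow_S, Nat.add_1_r. reflexivity. }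
  assert (HY : qpoch_inf (- Q) Q = qpoch_part (- Q) Q m * Y).
  { unfold Y, n. rewrite (qpoch_inf_split (- Q) Q m HQ). do 2 f_equal. rewrite Cpow_S. ring. }
  pose proof (euler_identity Q HQ) as Eu. rewrite HY in Eu.
  assert (HYnz : Y <> 0) by (intro E; rewrite E in Eu; injection Eu; intros; lra).
  assert (HP : qpoch_part Q Q n <> 0) by now apply qpoch_part_QQ_neq_0.
  transitivity (q ^ n * (qpoch_inf (- q ^ (n + 1)) q * qpoch_inf (q ^ (n + 1)) q) /
     (qpoch_inf (Ci * q ^ n) q * qpoch_inf (/ Ci * q ^ n) q)); [unfold Cdiv; ring|].
  rewrite Ea, Eb. fold X Y. rewrite HX. unfold n. rewrite qbinom_coef_S_eq. fold n.
  transitivity (q ^ n * X * (qpoch_part (- Q) Q m * Y * qpoch_inf Q (Q * Q)) / Y);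
    [rewrite Eu; field; auto | field; auto].
Qed.

Lemma sbar_factor_theta q : (Cmod q < 1)%R -> sbar_factor q = 1 + 2 * theta_pos (- (q * q)).
Proof.
  intros Hq. assert (HQ : (Cmod (- (q * q)) < 1)%R) by (rewrite Cmod_opp; now apply Cmod_mult_lt_1).
  rewrite <- (jacobi_triple_product _ HQ).
  replace (- (q * q) * - (q * q)) with (q * q * (q * q)) by ring.
  replace (- - (q * q)) with (q * q) by ring.
  unfold sbar_factor. rewrite qpoch_inf_even_odd by now apply Cmod_mult_lt_1. ring.
Qed.

Lemma sbar_factor_qbinom q : (Cmod q < 1)%R ->
  sbar_factor q * qbinom_series (q * q) q = 1 + 2 * theta_pos q.
Proof.
  intros Hq. assert (HQ : (Cmod (q * q) < 1)%R) by now apply Cmod_mult_lt_1.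
  rewrite <- (jacobi_triple_product q Hq). unfold sbar_factor.
  rewrite <- (qpoch_inf_mult_opp q (q * q) HQ).
  transitivity (qpoch_inf (q * q) (q * q) * qpoch_inf (- q) (q * q) *
    (qbinom_series (q * q) q * qpoch_inf q (q * q))); [ring|].
  rewrite q_binomial_theorem; auto.
Qed.

Lemma sbar_factor_opp q : sbar_factor (- q) = sbar_factor q.
Proof. unfold sbar_factor. now replace (- q * - q) with (q * q) by ring. Qed.

Section EvenOdd.

Variable q : C.
Hypothesis Hq : (Cmod q < 1)%R.

Let c := fun k => qbinom_coef (q * q) k * q ^ k.
Let t := fun m => q ^ (S m * S m).

Lemma qbinom_term_dominated : exists K, forall n, (Cmod (c n) <= K * Cmod q ^ n)%R.
Proof.
  destruct (qbinom_coef_bounded (q * q)) as [K [_ HK]]; [now apply Cmod_mult_lt_1|].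
  exists K. intros n. unfold c. rewrite Cmod_mult, Cmod_pow.
  apply Rmult_le_compat_r; auto. apply pow_le, Cmod_ge_0.
Qed.

Lemma theta_term_dominated n : (Cmod (t n) <= 1 * Cmod q ^ n)%R.
Proof. apply Cmod_pow_le; auto. nia. Qed.

(* Sum and difference of [sbar_factor_qbinom] at [q] and [-q] isolate the even and odd parts. *)
Lemma sbar_factor_even_odd :
  sbar_factor q * CSeries (fun k => c (2 * k + 1)%nat) = 2 * CSeries (fun k => t (2 * k)%nat) /\
  sbar_factor q * CSeries (fun k => c (2 * k)%nat) = 1 + 2 * CSeries (fun k => t (2 * k + 1)%nat).
Proof.
  assert (Hr : (0 <= Cmod q < 1)%R) by (split; [apply Cmod_ge_0 | auto]).
  assert (Hmq : (Cmod (- q) < 1)%R) by now rewrite Cmod_opp.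
  destruct qbinom_term_dominated as [K HK].
  pose proof (is_Cseries_split_even_odd c K _ Hr HK _
    (qbinom_series_is_Cseries _ (Cmod_mult_lt_1 q q Hq Hq) _ Hq)) as Fq.
  pose proof (is_Cseries_split_even_odd t 1 _ Hr theta_term_dominated _ (theta_pos_is_Cseries q Hq)) as Tq.
  assert (Fmq : qbinom_series (q * q) (- q) =
    CSeries (fun k => c (2 * k)%nat) - CSeries (fun k => c (2 * k + 1)%nat)).
  { apply (is_Cseries_alt_split_even_odd c K _ Hr HK).
    eapply is_Cseries_ext; [|apply qbinom_series_is_Cseries; auto using Cmod_mult_lt_1].
    intros k. unfold c. rewrite Cpow_opp. ring. }
  assert (Tmq : - theta_pos (- q) =
    CSeries (fun k => t (2 * k)%nat) - CSeries (fun k => t (2 * k + 1)%nat)).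
  { apply (is_Cseries_alt_split_even_odd t 1 _ Hr theta_term_dominated).
    replace (- theta_pos (- q)) with (- (1) * theta_pos (- q)) by ring.
    eapply is_Cseries_ext; [|apply is_Cseries_scal, theta_pos_is_Cseries, Hmq].
    intros k. unfold t. rewrite Cpow_opp, Cpow_m1_sqr, Cpow_S. ring. }
  pose proof (sbar_factor_qbinom q Hq) as Rq.
  pose proof (sbar_factor_qbinom (- q) Hmq) as Rmq.
  rewrite sbar_factor_opp in Rmq. replace (- q * - q) with (q * q) in Rmq by ring.
  rewrite Fq, Tq in Rq. rewrite Fmq in Rmq.
  replace (theta_pos (- q)) with (- (CSeries (fun k => t (2 * k)%nat) - CSeries (fun k => t (2 * k + 1)%nat)))
    in Rmq by (rewrite <- Tmq; ring).
  assert (H2 : (2 : C) <> 0) by (intro E; injection E; lra).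
  split.
  - apply (Cmult_cancel_l 2); auto.
    transitivity (sbar_factor q * (CSeries (fun k => c (2 * k)%nat) + CSeries (fun k => c (2 * k + 1)%nat))
      - sbar_factor q * (CSeries (fun k => c (2 * k)%nat) - CSeries (fun k => c (2 * k + 1)%nat)));
      [ring | rewrite Rq, Rmq; ring].
  - apply (Cmult_cancel_l 2); auto.
    transitivity (sbar_factor q * (CSeries (fun k => c (2 * k)%nat) + CSeries (fun k => c (2 * k + 1)%nat))
      + sbar_factor q * (CSeries (fun k => c (2 * k)%nat) - CSeries (fun k => c (2 * k + 1)%nat)));
      [ring | rewrite Rq, Rmq; ring].
Qed.

Lemma Sbar_i : Sbar Ci q = theta_pos q - theta_pos (- (q * q)).
Proof.
  assert (HQ : (Cmod (q * q) < 1)%R) by now apply Cmod_mult_lt_1.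
  change (CSeries (fun m => Sbar_term Ci q (S m)) = theta_pos q - theta_pos (- (q * q))).
  rewrite (is_Cseries_CSeries _ (sbar_factor q / 2 * (qbinom_series (q * q) q - c 0%nat))).
  - unfold c. rewrite qbinom_coef_0, Cmult_1_l.
    apply (Cmult_cancel_l 2); [intro E; injection E; lra|].
    transitivity (sbar_factor q * qbinom_series (q * q) q - sbar_factor q); [simpl; field|].
    rewrite sbar_factor_qbinom, sbar_factor_theta by auto. ring.
  - eapply is_Cseries_ext; [|apply is_Cseries_scal, is_Cseries_S, qbinom_series_is_Cseries; auto].
    intros m. symmetry. apply Sbar_term_i; auto; lia.
Qed.

Lemma Sbar1_i : Sbar1 Ci q = CSeries (fun k => q ^ (S (2 * k) * S (2 * k))).
Proof.
  destruct qbinom_term_dominated as [K HK].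
  assert (Hr : (0 <= Cmod q < 1)%R) by (split; [apply Cmod_ge_0 | auto]).
  transitivity (CSeries (fun k => Sbar_term Ci q (2 * k + 1))).
  { apply CSeries_ext. intros k. unfold Sbar_term. now replace (2 * k + 1 + 1)%nat with (2 * k + 2)%nat by lia. }
  rewrite (is_Cseries_CSeries _ (sbar_factor q / 2 * CSeries (fun k => c (2 * k + 1)%nat))).
  - apply (Cmult_cancel_l 2); [intro E; injection E; lra|].
    transitivity (sbar_factor q * CSeries (fun k => c (2 * k + 1)%nat)); [field|].
    now rewrite (proj1 sbar_factor_even_odd).
  - eapply is_Cseries_ext; [|apply is_Cseries_scal, (is_Cseries_odd_part c K _ Hr HK)].
    intros k. symmetry. apply Sbar_term_i; auto; lia.
Qed.

Lemma Sbar2_i : Sbar2 Ci q = CSeries (fun k => q ^ (S (2 * k + 1) * S (2 * k + 1))) - theta_pos (- (q * q)).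
Proof.
  destruct qbinom_term_dominated as [K HK].
  assert (Hr : (0 <= Cmod q < 1)%R) by (split; [apply Cmod_ge_0 | auto]).
  change (CSeries (fun m => Sbar_term Ci q (2 * S m)) =
          CSeries (fun k => t (2 * k + 1)%nat) - theta_pos (- (q * q))).
  rewrite (is_Cseries_CSeries _ (sbar_factor q / 2 * (CSeries (fun k => c (2 * k)%nat) - c (2 * 0)%nat))).
  - replace (c (2 * 0)%nat) with (RtoC 1) by (unfold c; rewrite Nat.mul_0_r, qbinom_coef_0; simpl; ring).
    apply (Cmult_cancel_l 2); [intro E; injection E; lra|].
    transitivity (sbar_factor q * CSeries (fun k => c (2 * k)%nat) - sbar_factor q); [field|].
    rewrite (proj2 sbar_factor_even_odd), sbar_factor_theta by auto. ring.
  - eapply is_Cseries_ext;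
      [|apply is_Cseries_scal, (is_Cseries_S (fun k => c (2 * k)%nat)), (is_Cseries_even_part c K _ Hr HK)].
    intros m. symmetry. apply Sbar_term_i; auto; lia.
Qed.

End EvenOdd.

Lemma RtoC_pow_n_m1 n : RtoC (@pow_n R_Ring (-1) n) = (- (1)) ^ n.
Proof.
  induction n as [|n IH]; [reflexivity|]. simpl. rewrite <- IH, RtoC_mult.
  f_equal. apply injective_projections; simpl; ring.
Qed.

Lemma theta_pos_CSeries q : CSeries (fun m => let n := S m in pow_n q (n * n)) = theta_pos q.
Proof. apply CSeries_ext. intros m. apply pow_n_Cpow. Qed.

Lemma odd_squares_CSeries q :
  CSeries (fun m => let n := S m in pow_n q ((2 * n - 1) * (2 * n - 1))) =
  CSeries (fun k => q ^ (S (2 * k) * S (2 * k))).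
Proof. apply CSeries_ext. intros m. cbv zeta. rewrite pow_n_Cpow. f_equal. lia. Qed.

Lemma even_squares_CSeries q :
  CSeries (fun m => let n := S m in pow_n q ((2 * n) * (2 * n))) =
  CSeries (fun k => q ^ (S (2 * k + 1) * S (2 * k + 1))).
Proof. apply CSeries_ext. intros m. cbv zeta. rewrite pow_n_Cpow. f_equal. lia. Qed.

Lemma theta_neg_sqr_CSeries q :
  CSeries (fun m => let n := S m in pow_n (-1) n * pow_n q (2 * (n * n))) = theta_pos (- (q * q)).
Proof.
  apply CSeries_ext. intros m. cbv zeta.
  rewrite RtoC_pow_n_m1, (pow_n_Cpow q), (Cpow_opp (q * q)), Cpow_m1_sqr, Cpow_sqr. reflexivity.
Qed.

Theorem theorem2p15 (q : C) (hq : (Cmod q < 1)%R) :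
  Sbar Ci q =
    CSeries (fun m => let n := S m in pow_n q (n*n))
    - CSeries (fun m => let n := S m in pow_n (-1) n * pow_n q (2*(n*n)))
  /\ Sbar1 Ci q =
    CSeries (fun m => let n := S m in pow_n q ((2*n-1)*(2*n-1)))
  /\ Sbar2 Ci q =
    CSeries (fun m => let n := S m in pow_n q ((2*n)*(2*n)))
    - CSeries (fun m => let n := S m in pow_n (-1) n * pow_n q (2*(n*n))).
Proof.
  rewrite theta_pos_CSeries, odd_squares_CSeries, even_squares_CSeries, theta_neg_sqr_CSeries.
  split; [|split]; [apply Sbar_i | apply Sbar1_i | apply Sbar2_i]; exact hq.
Qed.
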